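(* Let $M_N$ satisfy Hypothesis (H) with parameter $(c,c')$ and let $\mathbf m=(m_\sigma)_{\sigma\in\mathfrak S_{2k}}$ in $(\mathcal A,\mathbb C\mathfrak S_k,\mathcal E)$ be the limit given by Theorem MainTh1, realized so that moreover $u_\eta m_\sigma u_{\eta'}^*=m_{(\eta\sqcup\eta')\sigma}$ in $\mathcal A$ for all $\sigma,\eta,\eta'$. Let $\phi(a)$ denote the coefficient of $u_{\mathrm{id}}$ in $\mathcal E(a)$. Set $$s_1=\frac{1}{\sqrt{(2k)!k!c}}\sum_{\sigma}m_\sigma,\quad s_2=\frac{1}{\sqrt{(2k)!k!c}}\sum_\sigma\mathrm{sg}(\sigma)m_\sigma,\quad s_3=\frac{1}{\sqrt{2(2k)!k!(c+\Re c')}}\sum_\sigma(m_\sigma+m_\sigma^* ),$$ the last one assuming $c+\Re c'>0$ (sums over $\sigma\in\mathfrak S_{2k}$, $\mathrm{sg}$ the signature). Then for every $\eta\in\mathfrak S_k$, $$\mathcal E(s_1u_\eta s_1^* )=\mathcal E(s_1^*u_\eta s_1)=\mathcal E(s_3u_\eta s_3)=\frac1{k!}\sum_{\eta'\in\mathfrak S_k}u_{\eta'},$$ $$\mathcal E(s_2u_\eta s_2^* )=\mathcal E(s_2^*u_\eta s_2)=\frac{\mathrm{sg}(\eta)}{k!}\sum_{\eta'\in\mathfrak S_k}\mathrm{sg}(\eta')u_{\eta'}.$$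
   Context: Fix $k\ge1$; $[n]=\{1,\dots,n\}$; $\mathfrak S_n$ is the symmetric group on $[n]$. Flattening: $M_{N,\sigma}((i_1,\dots,i_k),(i_{k+1},\dots,i_{2k}))=M_N(i_{\sigma(1)},\dots,i_{\sigma(2k)})$. Hypothesis (H) with parameter $(c,c')$: for each $N$ the entries of $M_N$ are i.i.d., distributed as a centered complex random variable $m_N$ with finite moments of all orders, and $N^k\mathbb E|m_N|^2\to c>0$, $N^k\mathbb E[m_N^2]\to c'\in\mathbb C$, and $N^k\mathbb E[m_N^{\ell_1}\overline{m_N}^{\ell_2}]\to0$ whenever $\ell_1+\ell_2>2$. $\mathbb C\mathfrak S_k$: group algebra with basis $(u_\eta)$, $u_\eta u_{\eta'}=u_{\eta\eta'}$, $u_\eta^*=u_{\eta^{-1}}$. $(\mathcal A,\mathbb C\mathfrak S_k,\mathcal E)$: unital $*$-algebra containing $\mathbb C\mathfrak S_k$, with $\mathcal E:\mathcal A\to\mathbb C\mathfrak S_k$ unital, completely positive, $\mathcal E(bab')=b\mathcal E(a)b'$. For $\eta,\eta'\in\mathfrak S_k$, $\eta\sqcup\eta'\in\mathfrak S_{2k}$ is $i\mapsto\eta(i)$ for $i\in[k]$, $i\mapsto\eta'(i-k)+k$ otherwise; $\tau\in\mathfrak S_{2k}$ swaps $i\leftrightarrow i+k$. Theorem MainTh1 provides a centered $\mathfrak S_k$-circular family $(m_\sigma)$, limit in $\mathfrak S_k^*$-distribution of the flattenings, with $\mathcal E(m_\sigma u_\eta m_{\sigma'}^* )=c\,u_{\eta'}$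 if $\sigma=(\eta'\sqcup\eta)\sigma'$ and $0$ if no such $\eta'$ exists; $\mathcal E(m_\sigma^*u_\eta m_{\sigma'})=c\,u_{\eta'}$ if $\sigma=(\eta\sqcup\eta')\sigma'$, else $0$; $\mathcal E(m_\sigma u_\eta m_{\sigma'})=c'u_{\eta'}$ if $\sigma=\tau(\eta\sqcup\eta')\sigma'$, else $0$. *)

From HB Require Import structures.
From mathcomp Require Import all_boot all_order all_fingroup all_algebra.
Set Implicit Arguments. Unset Strict Implicit. Unset Printing Implicit Defensive.
Import GRing.Theory Num.Theory.
Local Open Scope ring_scope.

(* Composition of permutations in the usual functional convention:
   (compp s t) x = s (t x).  (mathcomp's s * t applies s first.) *)
Definition compp (T : finType) (s t : {perm T}) : {perm T} := (t * s)%g.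

Lemma comppE (T : finType) (s t : {perm T}) x : compp s t x = s (t x).
Proof. by rewrite /compp permM. Qed.

Definition sqcup_fun k (e e' : 'S_k) (i : 'I_(k + k)) : 'I_(k + k) :=
  match split i with
  | inl j => lshift k (e j)
  | inr j => rshift k (e' j)
  end.

Lemma sqcup_fun_inj k (e e' : 'S_k) : injective (sqcup_fun e e').
Proof.
move=> i j; rewrite /sqcup_fun.
case: splitP => a Ha; case: splitP => b Hb => /(congr1 val) /= H;
  apply/val_inj; rewrite /= Ha Hb.
- by rewrite (perm_inj (val_inj H)).
- by move: (ltn_ord (e a)); rewrite H -ltn_subRL subnn.
- by move: (ltn_ord (e b)); rewrite -H -ltn_subRL subnn.
- by move/addnI: H => /val_inj/perm_inj ->.
Qed.

Definition sqcup k (e e' : 'S_k) : 'S_(k + k) := perm (@sqcup_fun_inj k e e').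

Definition tau_fun k (i : 'I_(k + k)) : 'I_(k + k) :=
  match split i with
  | inl j => rshift k j
  | inr j => lshift k j
  end.

Lemma tau_fun_inj k : injective (@tau_fun k).
Proof.
move=> i j; rewrite /tau_fun.
case: splitP => a Ha; case: splitP => b Hb => /(congr1 val) /= H;
  apply/val_inj; rewrite /= Ha Hb.
- by move/addnI: H => ->.
- by move: (ltn_ord b); rewrite -H -ltn_subRL subnn.
- by move: (ltn_ord a); rewrite H -ltn_subRL subnn.
- by rewrite H.
Qed.

Definition tau k : 'S_(k + k) := perm (@tau_fun_inj k).

Definition sg (R : pzRingType) (T : finType) (s : {perm T}) : R := (-1) ^+ odd_perm s.

Definition inCS (C : fieldType) (A : lalgType C) k (u : 'S_k -> A) (b : A) : Prop :=
  exists f : 'S_k -> C, b = \sum_(e : 'S_k) f e *: u e.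

Definition star_algebra (C : numClosedFieldType) (A : algType C) (star : A -> A) : Prop :=
  [/\ forall a b, star (a + b) = star a + star b,
      forall (l : C) a, star (l *: a) = Num.conj l *: star a,
      forall a b, star (a * b) = star b * star a,
      forall a, star (star a) = a &
      star 1 = 1].

Definition group_algebra_embedding (C : numClosedFieldType) (A : algType C)
    (star : A -> A) k (u : 'S_k -> A) : Prop :=
  [/\ u 1%g = 1,
      forall e e', u (compp e e') = u e * u e',
      forall e, star (u e) = u (e^-1)%g &
      forall f : 'S_k -> C, \sum_(e : 'S_k) f e *: u e = 0 -> forall e, f e = 0].

Definition cond_expectation (C : numClosedFieldType) (A : algType C)
    (star : A -> A) k (u : 'S_k -> A) (E : A -> A) : Prop :=
  [/\ (forall a b, E (a + b) = E a + E b) /\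
        (forall (l : C) a, E (l *: a) = l *: E a),
      E 1 = 1,
      forall a, inCS u (E a),
      forall a, E (star a) = star (E a) &
      forall b a b', inCS u b -> inCS u b' -> E (b * a * b') = b * E a * b'].

(* Write S = sum_sigma m_sigma and S_sg = sum_sigma sg(sigma) m_sigma.  Each
   quantity E(x u_eta y) to be computed is a double sum over (sigma, sigma')
   of covariances; by the covariance rules of Theorem MainTh1, for fixed
   sigma' the term indexed by sigma vanishes unless sigma is the image of
   some eta' under an injective map S_k -> S_2k (eta' |-> (eta' |_| eta) sigma'
   and its variants), in which case it equals c u_eta' (or c' u_eta').  So
   each inner sum is c * sum_eta' u_eta', and the double sum is (2k)! times it.
   For the signed sums one also needs sg(eta |_| eta') = sg(eta) sg(eta'),
   proved by decomposing into transpositions.  The case of S + star S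
   combines four such sums; the term star S u_eta star S is the star of
   S u_(eta^-1) S, and E commutes with star. *)

From HB Require Import structures.
From mathcomp Require Import all_boot all_order all_fingroup all_algebra ring.
Set Implicit Arguments. Unset Strict Implicit. Unset Printing Implicit Defensive.
Import Order.TTheory GRing.Theory Num.Theory.
Local Open Scope ring_scope.

Lemma sqcupL k (a b : 'S_k) j : sqcup a b (lshift k j) = lshift k (a j).
Proof. by rewrite permE /sqcup_fun (unsplitK (inl j)). Qed.

Lemma sqcupR k (a b : 'S_k) j : sqcup a b (rshift k j) = rshift k (b j).
Proof. by rewrite permE /sqcup_fun (unsplitK (inr j)). Qed.

Lemma perm_split_eq k (f g : 'S_(k + k)) :
  (forall j, f (lshift k j) = g (lshift k j)) ->
  (forall j, f (rshift k j) = g (rshift k j)) -> f = g.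
Proof. by move=> fgL fgR; apply/permP => i; rewrite -(splitK i); case: split. Qed.

Lemma sqcupM k (a b a' b' : 'S_k) :
  sqcup (a * a')%g (b * b')%g = (sqcup a b * sqcup a' b')%g.
Proof. by apply: perm_split_eq => j; rewrite permM ?sqcupL ?sqcupR permM. Qed.

Lemma sqcup_tpermL k (x y : 'I_k) :
  sqcup (tperm x y) 1 = tperm (lshift k x) (lshift k y).
Proof.
apply: perm_split_eq => j; rewrite ?sqcupL ?sqcupR ?perm1 !permE /= ?eq_shift //.
by case: ifP => //; case: ifP.
Qed.

Lemma sqcup_tpermR k (x y : 'I_k) :
  sqcup 1 (tperm x y) = tperm (rshift k x) (rshift k y).
Proof.
apply: perm_split_eq => j; rewrite ?sqcupL ?sqcupR ?perm1 !permE /= ?eq_shift //.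
by case: ifP => //; case: ifP.
Qed.

Lemma odd_perm_tperm_morph k n (phi : 'S_k -> 'S_n) (f : 'I_k -> 'I_n) :
  injective f -> {morph phi : a b / (a * b)%g} ->
  (forall x y, phi (tperm x y) = tperm (f x) (f y)) ->
  forall a, odd_perm (phi a) = odd_perm a.
Proof.
move=> f_inj phiM phiT a.
have phi1 : phi 1%g = 1%g by apply: (mulgI (phi 1%g)); rewrite -phiM !mulg1.
have [ts -> _] := prod_tpermP a; elim: ts => [|t ts IH].
  by rewrite !big_nil phi1 !odd_perm1.
by rewrite !big_cons phiM !odd_permM IH phiT !odd_tperm (inj_eq f_inj).
Qed.

(* Parity is additive on block permutations, as eta |_| eta' is the product
   of the two block embeddings. *)
Lemma odd_sqcup k (a b : 'S_k) : odd_perm (sqcup a b) = odd_perm a (+) odd_perm b.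
Proof.
have -> : sqcup a b = (sqcup a 1 * sqcup 1 b)%g by rewrite -sqcupM mulg1 mul1g.
have oddL := @odd_perm_tperm_morph _ _ (fun a => sqcup a 1%g) _ (@lshift_inj k k).
have oddR := @odd_perm_tperm_morph _ _ (sqcup 1%g) _ (@rshift_inj k k).
rewrite odd_permM oddL ?oddR //.
- by move=> b1 b2; rewrite -sqcupM mulg1.
- exact: sqcup_tpermR.
- by move=> a1 a2; rewrite -sqcupM mulg1.
- exact: sqcup_tpermL.
Qed.

Lemma sqcup_injl k (b : 'S_k) : injective (fun a => sqcup a b).
Proof.
move=> a a' eq_aa'; apply/permP => j; apply: (@lshift_inj k k).
by rewrite -(sqcupL a b) -(sqcupL a' b) eq_aa'.
Qed.

Lemma sqcup_injr k (a : 'S_k) : injective (sqcup a).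
Proof.
move=> b b' eq_bb'; apply/permP => j; apply: (@rshift_inj k k).
by rewrite -(sqcupR a b) -(sqcupR a b') eq_bb'.
Qed.

Lemma compp_injl (T : finType) (t : {perm T}) : injective (fun s => compp s t).
Proof. exact: mulgI. Qed.

Lemma compp_injr (T : finType) (s : {perm T}) : injective (compp s).
Proof. exact: mulIg. Qed.

Section Signature.
Variable R : pzRingType.

Lemma sgM (T : finType) (s t : {perm T}) : sg R (compp s t) = sg R s * sg R t.
Proof. by rewrite /sg /compp odd_permM addbC signr_addb. Qed.

Lemma sg_sqcup k (a b : 'S_k) : sg R (sqcup a b) = sg R a * sg R b.
Proof. by rewrite /sg odd_sqcup signr_addb. Qed.

Lemma sgK (T : finType) (s : {perm T}) : sg R s * sg R s = 1.
Proof. by rewrite /sg -signr_addb addbb. Qed.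

End Signature.

Lemma sg_conj (C : numClosedFieldType) (T : finType) (s : {perm T}) :
  (sg C s)^* = sg C s.
Proof. exact: rmorph_sign. Qed.

Lemma sum_over_image (I J : finType) (V : zmodType) (h : J -> I) (f : I -> V) (v : J -> V) :
  injective h ->
  (forall s, (forall e, s = h e -> f s = v e) /\ ((forall e, s <> h e) -> f s = 0)) ->
  \sum_s f s = \sum_e v e.
Proof.
move=> h_inj hf; rewrite (bigID (mem (codom h))) /= [X in _ + X]big1 ?addr0.
  rewrite -big_uniq ?big_image; last by rewrite map_inj_uniq ?enum_uniq.
  by apply: eq_bigr => e _; apply: (proj1 (hf _)).
by move=> s /codomP nhs; apply: (proj2 (hf s)) => e hse; apply: nhs; exists e.
Qed.

Lemma double_sum_over_images (I J : finType) (V : zmodType)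
    (h : I -> J -> I) (F : I -> I -> V) (v : J -> V) :
  (forall t, injective (h t)) ->
  (forall s t, (forall e, s = h t e -> F s t = v e) /\
               ((forall e, s <> h t e) -> F s t = 0)) ->
  \sum_s \sum_t F s t = (\sum_e v e) *+ #|I|.
Proof.
move=> h_inj hF; rewrite exchange_big -sumr_const.
by apply: eq_bigr => t _; apply: (sum_over_image (h_inj t)) => s; apply: hF.
Qed.

Lemma additive_sum (U V : zmodType) (f : U -> V) :
  {morph f : a b / a + b} ->
  forall (I : finType) (F : I -> U), f (\sum_i F i) = \sum_i f (F i).
Proof.
move=> fD I F; have f0 : f 0 = 0 by apply: (addrI (f 0)); rewrite -fD !addr0.
exact: (big_morph f fD f0).
Qed.

Section Sandwich.
Variables (C : fieldType) (A : algType C) (E : A -> A).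
Hypothesis E_add : {morph E : a b / a + b}.
Hypothesis E_scale : forall (l : C) a, E (l *: a) = l *: E a.

Lemma E_sandwich_sums (I : finType) (f g : I -> A) (x : A) :
  E ((\sum_s f s) * x * (\sum_t g t)) = \sum_s \sum_t E (f s * x * g t).
Proof.
rewrite mulr_suml mulr_suml (additive_sum E_add); apply: eq_bigr => s _.
by rewrite mulr_sumr (additive_sum E_add).
Qed.

Lemma E_sandwich_scale (a b : C) (x y z : A) :
  E ((a *: x) * y * (b *: z)) = (a * b) *: E (x * y * z).
Proof. by rewrite -scalerAl -scalerAl -scalerAr scalerA E_scale. Qed.

End Sandwich.

Lemma invsqrtC_sq (C : numClosedFieldType) (x : C) : (sqrtC x)^-1 * (sqrtC x)^-1 = x^-1.
Proof. by rewrite -expr2 exprVn sqrtCK. Qed.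

Lemma invsqrtC_normsq (C : numClosedFieldType) (x : C) :
  0 <= x -> (sqrtC x)^-1 * ((sqrtC x)^-1)^* = x^-1.
Proof. by move=> x_ge0; rewrite geC0_conj ?invr_ge0 ?sqrtC_ge0 // invsqrtC_sq. Qed.

(* From now on m is a family satisfying the three covariance rules of
   Theorem MainTh1 with respect to the C S_k-valued conditional expectation E,
   and the group elements satisfy u_eta^* = u_(eta^-1). *)
Section CircularFamily.
Variables (C : numClosedFieldType) (A : algType C) (star : A -> A).
Variables (k : nat) (u : 'S_k -> A) (E : A -> A) (c c' : C).
Variable m : 'S_(k + k) -> A.
Hypothesis Hstar : star_algebra star.
Hypothesis u_star : forall e, star (u e) = u (e^-1)%g.
Hypothesis HE : cond_expectation star u E.
Hypothesis Hcov1 : forall (s s' : 'S_(k + k)) (e : 'S_k),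
  (forall e' : 'S_k, s = compp (sqcup e' e) s' ->
      E (m s * u e * star (m s')) = c *: u e') /\
  ((forall e' : 'S_k, s <> compp (sqcup e' e) s') ->
      E (m s * u e * star (m s')) = 0).
Hypothesis Hcov2 : forall (s s' : 'S_(k + k)) (e : 'S_k),
  (forall e' : 'S_k, s = compp (sqcup e e') s' ->
      E (star (m s) * u e * m s') = c *: u e') /\
  ((forall e' : 'S_k, s <> compp (sqcup e e') s') ->
      E (star (m s) * u e * m s') = 0).
Hypothesis Hcov3 : forall (s s' : 'S_(k + k)) (e : 'S_k),
  (forall e' : 'S_k, s = compp (tau k) (compp (sqcup e e') s') ->
      E (m s * u e * m s') = c' *: u e') /\
  ((forall e' : 'S_k, s <> compp (tau k) (compp (sqcup e e') s')) ->
      E (m s * u e * m s') = 0).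

Local Notation S := (\sum_(s : 'S_(k + k)) m s).
Local Notation S_sg := (\sum_(s : 'S_(k + k)) (sg C s *: m s)).
Local Notation U := (\sum_(e : 'S_k) u e).
Local Notation U_sg := (\sum_(e : 'S_k) (sg C e *: u e)).

Let star_add : {morph star : a b / a + b}. Proof. by case: Hstar. Qed.
Let star_scale (l : C) a : star (l *: a) = l^* *: star a. Proof. by case: Hstar. Qed.
Let E_add : {morph E : a b / a + b}. Proof. by case: HE => -[]. Qed.
Let E_scale (l : C) a : E (l *: a) = l *: E a. Proof. by case: HE => -[]. Qed.

Lemma star_U : star U = U.
Proof.
rewrite (additive_sum star_add); under eq_bigr do rewrite u_star.
by rewrite (reindex_inj invg_inj); under eq_bigr do rewrite invgK.
Qed.

Lemma star_S_sg : star S_sg = \sum_(s : 'S_(k + k)) (sg C s *: star (m s)).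
Proof. by rewrite (additive_sum star_add); under eq_bigr do rewrite star_scale sg_conj. Qed.

Lemma scaled_sum_card (v : 'S_k -> A) (l : C) :
  (\sum_e l *: v e) *+ #|{: 'S_(k + k)}| = ((k + k)`!%:R * l) *: \sum_e v e.
Proof. by rewrite card_Sn -scaler_sumr -scaler_nat scalerA. Qed.

Lemma E_S_S_star e : E (S * u e * star S) = ((k + k)`!%:R * c) *: U.
Proof.
rewrite (additive_sum star_add) (E_sandwich_sums E_add) -scaled_sum_card.
apply: (double_sum_over_images (h := fun t e' => compp (sqcup e' e) t)).
  by move=> t e1 e2 /compp_injl /sqcup_injl.
by move=> s t; apply: Hcov1.
Qed.

Lemma E_S_star_S e : E (star S * u e * S) = ((k + k)`!%:R * c) *: U.
Proof.
rewrite (additive_sum star_add) (E_sandwich_sums E_add) -scaled_sum_card.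
apply: (double_sum_over_images (h := fun t e' => compp (sqcup e e') t)).
  by move=> t e1 e2 /compp_injl /sqcup_injr.
by move=> s t; apply: Hcov2.
Qed.

Lemma E_S_S e : E (S * u e * S) = ((k + k)`!%:R * c') *: U.
Proof.
rewrite (E_sandwich_sums E_add) -scaled_sum_card.
apply: (double_sum_over_images (h := fun t e' => compp (tau k) (compp (sqcup e e') t))).
  by move=> t e1 e2 /compp_injr /compp_injl /sqcup_injr.
by move=> s t; apply: Hcov3.
Qed.

(* The last one is the adjoint of E(S u_(eta^-1) S), since E commutes with
   the involution. *)
Lemma E_S_star_S_star e : E (star S * u e * star S) = ((k + k)`!%:R * c'^*) *: U.
Proof.
have star_mul : {morph star : a b / a * b >-> b * a} by case: Hstar.
have -> : star S * u e * star S = star (S * u (e^-1)%g * S).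
  by rewrite !star_mul u_star invgK mulrA.
have [_ _ _ E_star _] := HE.
by rewrite E_star E_S_S star_scale star_U rmorphM rmorph_nat.
Qed.

(* Signed versions: when sigma = (eta' |_| eta) sigma', the signs combine to
   sg(sigma) sg(sigma') = sg(eta') sg(eta). *)
Lemma E_S_sg_S_sg_star e :
  E (S_sg * u e * star S_sg) = ((k + k)`!%:R * (sg C e * c)) *: U_sg.
Proof.
rewrite star_S_sg (E_sandwich_sums E_add) -scaled_sum_card.
apply: (double_sum_over_images (h := fun t e' => compp (sqcup e' e) t)).
  by move=> t e1 e2 /compp_injl /sqcup_injl.
move=> s t; have [cov_match cov_miss] := Hcov1 s t e.
rewrite E_sandwich_scale //; split => [e' def_s | miss]; last by rewrite cov_miss ?scaler0.
rewrite (cov_match e' def_s) scalerA scalerA def_s sgM sg_sqcup.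
by congr (_ *: _); rewrite -(mulrA (sg C e' * sg C e)) sgK; ring.
Qed.

Lemma E_S_sg_star_S_sg e :
  E (star S_sg * u e * S_sg) = ((k + k)`!%:R * (sg C e * c)) *: U_sg.
Proof.
rewrite star_S_sg (E_sandwich_sums E_add) -scaled_sum_card.
apply: (double_sum_over_images (h := fun t e' => compp (sqcup e e') t)).
  by move=> t e1 e2 /compp_injl /sqcup_injr.
move=> s t; have [cov_match cov_miss] := Hcov2 s t e.
rewrite E_sandwich_scale //; split => [e' def_s | miss]; last by rewrite cov_miss ?scaler0.
rewrite (cov_match e' def_s) scalerA scalerA def_s sgM sg_sqcup.
by congr (_ *: _); rewrite -(mulrA (sg C e * sg C e')) sgK; ring.
Qed.

(* For the self-adjoint sum S + S^*, the four sums add up to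
   (2k)! (2c + c' + c'^* ) = (2k)! 2 (c + Re c'). *)
Lemma E_S_S_star_self e :
  E ((S + star S) * u e * (S + star S)) =
  ((k + k)`!%:R * (2 * (c + 'Re c'))) *: U.
Proof.
rewrite !mulrDl !mulrDr !E_add E_S_S E_S_S_star E_S_star_S E_S_star_S_star.
by rewrite -!scalerDl ReE; congr (_ *: _); field.
Qed.

Local Notation N := (((k + k)`! * k`!)%:R : C).

Lemma normalization_factor (x : C) : x != 0 ->
  (N * x)^-1 * ((k + k)`!%:R * x) = (k`!%:R)^-1.
Proof.
move=> x_neq0; have fact_neq0 n : (n`!%:R : C) != 0 by rewrite pnatr_eq0 -lt0n fact_gt0.
by rewrite natrM; field; rewrite !fact_neq0 x_neq0.
Qed.

Lemma normalized_self_adjoint_part e : 0 < c + 'Re c' ->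
  E (((sqrtC (2 * N * (c + 'Re c')))^-1 *: \sum_(s : 'S_(k + k)) (m s + star (m s)))
     * u e *
     ((sqrtC (2 * N * (c + 'Re c')))^-1 *: \sum_(s : 'S_(k + k)) (m s + star (m s)))) =
  (k`!%:R)^-1 *: U.
Proof.
move=> pos; rewrite big_split /= -(additive_sum star_add) E_sandwich_scale //.
rewrite E_S_S_star_self scalerA invsqrtC_sq -(mulrA 2) (mulrCA 2).
by rewrite normalization_factor // mulf_neq0 ?pnatr_eq0 ?lt0r_neq0.
Qed.

(* The remaining statements use c > 0, making N c a nonnegative real. *)
Hypothesis c_gt0 : 0 < c.

Let Nc_ge0 : 0 <= N * c.
Proof. by apply: mulr_ge0; [exact: ler0n | exact: ltW]. Qed.

Lemma normalized_S_S_star e :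
  E (((sqrtC (N * c))^-1 *: S) * u e * star ((sqrtC (N * c))^-1 *: S)) =
  (k`!%:R)^-1 *: U.
Proof.
rewrite star_scale E_sandwich_scale // E_S_S_star scalerA invsqrtC_normsq //.
by rewrite normalization_factor ?lt0r_neq0.
Qed.

Lemma normalized_S_star_S e :
  E (star ((sqrtC (N * c))^-1 *: S) * u e * ((sqrtC (N * c))^-1 *: S)) =
  (k`!%:R)^-1 *: U.
Proof.
rewrite star_scale E_sandwich_scale // E_S_star_S scalerA [_^* * _]mulrC invsqrtC_normsq //.
by rewrite normalization_factor ?lt0r_neq0.
Qed.

Lemma normalized_S_sg_S_sg_star e :
  E (((sqrtC (N * c))^-1 *: S_sg) * u e * star ((sqrtC (N * c))^-1 *: S_sg)) =
  (sg C e / k`!%:R) *: U_sg.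
Proof.
rewrite star_scale E_sandwich_scale // E_S_sg_S_sg_star scalerA invsqrtC_normsq //.
by rewrite [(k + k)`!%:R * _]mulrCA (mulrCA _ (sg C e)) normalization_factor ?lt0r_neq0.
Qed.

Lemma normalized_S_sg_star_S_sg e :
  E (star ((sqrtC (N * c))^-1 *: S_sg) * u e * ((sqrtC (N * c))^-1 *: S_sg)) =
  (sg C e / k`!%:R) *: U_sg.
Proof.
rewrite star_scale E_sandwich_scale // E_S_sg_star_S_sg scalerA [_^* * _]mulrC.
by rewrite invsqrtC_normsq // [(k + k)`!%:R * _]mulrCA (mulrCA _ (sg C e)) normalization_factor ?lt0r_neq0.
Qed.

End CircularFamily.

Theorem mainTheorem13
  (C : numClosedFieldType) (A : algType C) (star : A -> A)
  (k : nat) (u : 'S_k -> A) (E : A -> A)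
  (c c' : C) (m : 'S_(k + k) -> A)
  (Hstar : star_algebra star)
  (Hu : group_algebra_embedding star u)
  (HE : cond_expectation star u E)
  (Hc : 0 < c)
  (* centered *)
  (Hcent : forall s, E (m s) = 0)
  (* covariance of the S_k-circular family given by Theorem MainTh1 *)
  (Hcov1 : forall (s s' : 'S_(k + k)) (e : 'S_k),
      (forall e' : 'S_k, s = compp (sqcup e' e) s' ->
          E (m s * u e * star (m s')) = c *: u e') /\
      ((forall e' : 'S_k, s <> compp (sqcup e' e) s') ->
          E (m s * u e * star (m s')) = 0))
  (Hcov2 : forall (s s' : 'S_(k + k)) (e : 'S_k),
      (forall e' : 'S_k, s = compp (sqcup e e') s' ->
          E (star (m s) * u e * m s') = c *: u e') /\
      ((forall e' : 'S_k, s <> compp (sqcup e e') s') ->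
          E (star (m s) * u e * m s') = 0))
  (Hcov3 : forall (s s' : 'S_(k + k)) (e : 'S_k),
      (forall e' : 'S_k, s = compp (tau k) (compp (sqcup e e') s') ->
          E (m s * u e * m s') = c' *: u e') /\
      ((forall e' : 'S_k, s <> compp (tau k) (compp (sqcup e e') s')) ->
          E (m s * u e * m s') = 0))
  (* equivariance of the realization *)
  (Hequiv : forall (s : 'S_(k + k)) (e e' : 'S_k),
      u e * m s * star (u e') = m (compp (sqcup e e') s)) :
  let N : C := ((k + k)`! * k`!)%:R in
  let s1 := (sqrtC (N * c))^-1 *: \sum_(s : 'S_(k + k)) m s in
  let s2 := (sqrtC (N * c))^-1 *: \sum_(s : 'S_(k + k)) (sg C s *: m s) in
  let s3 := (sqrtC (2 * N * (c + 'Re c')))^-1 *: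
              \sum_(s : 'S_(k + k)) (m s + star (m s)) in
  let U := (k`!%:R : C)^-1 *: \sum_(e' : 'S_k) u e' in
  forall e : 'S_k,
    [/\ E (s1 * u e * star s1) = U,
        E (star s1 * u e * s1) = U,
        (0 < c + 'Re c' -> E (s3 * u e * s3) = U),
        E (s2 * u e * star s2) =
          (sg C e / k`!%:R) *: \sum_(e' : 'S_k) (sg C e' *: u e') &
        E (star s2 * u e * s2) =
          (sg C e / k`!%:R) *: \sum_(e' : 'S_k) (sg C e' *: u e')].
Proof.
move=> N s1 s2 s3 U e; have [_ _ u_star _] := Hu.
split.
- exact: normalized_S_S_star Hstar HE Hcov1 Hc e.
- exact: normalized_S_star_S Hstar HE Hcov2 Hc e.
- exact: normalized_self_adjoint_part Hstar u_star HE Hcov1 Hcov2 Hcov3 e.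
- exact: normalized_S_sg_S_sg_star Hstar HE Hcov1 Hc e.
- exact: normalized_S_sg_star_S_sg Hstar HE Hcov2 Hc e.
Qed.
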